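(* Let $n\ge 1$, let $c\in\mathbb{R}^n$ with $c_1\ge c_2\ge\cdots\ge c_n\ge 0$, and let $u\in\mathbb{R}^n$ with $u_i>0$ for all $i$. Consider the problem \[ \text{(P)}\qquad \min\ f(x)=\tfrac12\Big(\sum_{i=1}^n x_i\Big)^2-\sum_{i=1}^n c_ix_i\quad\text{subject to } 0\le x\le u . \] For $k=0,\dots,n$ let $U_k=\sum_{i=1}^k u_i$ ($U_0=0$) and let $x^{(k)}$ be the vector with $x^{(k)}_i=u_i$ for $i\le k$ and $x^{(k)}_i=0$ for $i>k$. For $k=1,\dots,n$ let $G_k=U_{k-1}+\frac12u_k-c_k$. Let $e_i$ be the $i$-th standard unit vector. (i) If $\bar n$, the smallest index in $\{1,\dots,n\}$ with $G_{\bar n}\ge0$, exists and satisfies $1<\bar n\le n$, let $\delta_1=\min\{c_{\bar n-1}-U_{\bar n-2},u_{\bar n-1}\}$, $\delta_2=\max\{c_{\bar n}-U_{\bar n-1},0\}$, $\bar x=x^{(\bar n-2)}+\delta_1e_{\bar n-1}$, $\tilde x=x^{(\bar n-1)}+\delta_2e_{\bar n}$. Then $\min\{f(\bar x),f(\tilde x)\}$ is the optimal value of (P). (ii) If $G_1\ge 0$ (i.e. $\bar n=1$), let $\tilde x=\min\{c_1,u_1\}\,e_1$. Then $f(\tilde x)$ is the optimal value of (P). (iii) If $G_k<0$ for all $k=1,\dots,n$, let $\delta'=\min\{c_n-U_{n-1},u_n\}$ and $\tilde x=x^{(n-1)}+\delta'e_n$. Then $\tilde x$ is an optimal solution of (P),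 i.e. $f(\tilde x)$ is its optimal value.
   Context: Inequalities between vectors are componentwise. *)

From HB Require Import structures.
From mathcomp Require Import all_boot all_order all_algebra.
Set Implicit Arguments. Unset Strict Implicit. Unset Printing Implicit Defensive.
Import Order.TTheory GRing.Theory Num.Theory.
Local Open Scope ring_scope.

(* Vectors in R^n are functions 'I_n -> R; coordinate i : 'I_n (0-based)
   corresponds to the paper's coordinate i+1 (1-based). *)

Section Defs.
Variables (R : realFieldType) (n : nat).

(* 1-based access: at1 v k = v_k for 1 <= k <= n, and 0 otherwise *)
Definition at1 (v : 'I_n -> R) (k : nat) : R :=
  if insub k.-1 is Some i then (if (0 < k)%N then v i else 0) else 0.

Definition fobj (c x : 'I_n -> R) : R :=
  2^-1 * (\sum_(i < n) x i) ^+ 2 - \sum_(i < n) c i * x i.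

Definition feasible (u x : 'I_n -> R) : Prop :=
  forall i : 'I_n, 0 <= x i /\ x i <= u i.

Definition is_opt_value (c u : 'I_n -> R) (v : R) : Prop :=
  (exists x0, feasible u x0 /\ fobj c x0 = v) /\
  (forall x, feasible u x -> v <= fobj c x).

Definition is_opt_sol (c u x : 'I_n -> R) : Prop :=
  feasible u x /\ (forall y, feasible u y -> fobj c x <= fobj c y).

Definition Usum (u : 'I_n -> R) (k : nat) : R :=
  \sum_(i < n | (i < k)%N) u i.

Definition xk (u : 'I_n -> R) (k : nat) : 'I_n -> R :=
  fun i => if (i < k)%N then u i else 0.

Definition unitv (j : nat) : 'I_n -> R :=
  fun i => if (i.+1 == j)%N then 1 else 0.

Definition Gk (c u : 'I_n -> R) (k : nat) : R :=
  Usum u k.-1 + 2^-1 * at1 u k - at1 c k.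

Definition vadd (x y : 'I_n -> R) : 'I_n -> R := fun i => x i + y i.
Definition vscale (a : R) (x : 'I_n -> R) : 'I_n -> R := fun i => a * x i.

End Defs.
Arguments unitv {R n} j _.

From HB Require Import structures.
From mathcomp Require Import all_boot all_order all_algebra.
From mathcomp Require Import ring lra.
Import Order.TTheory GRing.Theory Num.Theory.
Local Open Scope ring_scope.
Set Implicit Arguments. Unset Strict Implicit.

(* For feasible p and x, with s := sum p, there is the exact expansion
   f x - f p = (sum x - s)^2 / 2 + sum_i (s - c_i)(x_i - p_i),
   so p is optimal as soon as every move x_i - p_i allowed by the box has the
   sign of s - c_i (the KKT conditions).  For nonincreasing c these hold at
   the greedy point that fills the boxes u_1, u_2, ... in order and stops in
   box K at level s = U_(K-1) + d with d = min(c_K - U_(K-1), u_K), provided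
   U_(K-1) <= c_K and c_i <= U_K for i > K.  The signs of the G_k tell at which
   K this happens; in case (i) it is the box of xbar or that of xtil, so the
   smaller of the two values is the optimal value. *)

Section Quadratic.
Variables (R : realFieldType) (n : nat) (c u : 'I_n -> R).

Lemma fobjB (x p : 'I_n -> R) :
  fobj c x - fobj c p =
  2^-1 * (\sum_i x i - \sum_i p i) ^+ 2
    + \sum_i (\sum_j p j - c i) * (x i - p i).
Proof.
set sp := \sum_j p j; set sx := \sum_j x j.
have -> : \sum_i (sp - c i) * (x i - p i) =
          sp * sx - sp * sp - (\sum_i c i * x i - \sum_i c i * p i).
  rewrite (eq_bigr (fun i => sp * x i - sp * p i - (c i * x i - c i * p i))).
    by rewrite !sumrB -!mulr_sumr.
  by move=> i _; ring.
rewrite /fobj -/sp -/sx; by field.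
Qed.

Lemma kkt_opt_sol (p : 'I_n -> R) : feasible u p ->
  (forall i, [\/ p i = 0 /\ c i <= \sum_j p j,
                 p i = u i /\ \sum_j p j <= c i
               | \sum_j p j = c i]) ->
  is_opt_sol c u p.
Proof.
move=> feas_p kkt; split=> // x feas_x; rewrite -subr_ge0 fobjB.
apply: addr_ge0; first by rewrite mulr_ge0 ?invr_ge0 ?sqr_ge0 ?ler0n.
apply: sumr_ge0 => i _; have [p_ge0 p_le] := feas_p i; have [x_ge0 x_le] := feas_x i.
by case: (kkt i) => [[-> ?]|[-> ?]|->]; nra.
Qed.

Lemma opt_value_of_sol (x : 'I_n -> R) :
  is_opt_sol c u x -> is_opt_value c u (fobj c x).
Proof. by case=> feas_x opt_x; split; first exists x. Qed.

Lemma fobj_ext (x y : 'I_n -> R) : x =1 y -> fobj c x = fobj c y.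
Proof.
move=> exy; rewrite /fobj (eq_bigr _ (fun i _ => exy i)).
by congr (_ - _); apply: eq_bigr => i _; rewrite exy.
Qed.

Lemma opt_value_min_l (x y : 'I_n -> R) : is_opt_sol c u x -> feasible u y ->
  is_opt_value c u (Num.min (fobj c x) (fobj c y)).
Proof.
by move=> opt_x feas_y; rewrite min_l; [apply: opt_value_of_sol | apply: opt_x.2].
Qed.

Lemma opt_value_min_r (x y : 'I_n -> R) : is_opt_sol c u y -> feasible u x ->
  is_opt_value c u (Num.min (fobj c x) (fobj c y)).
Proof.
by move=> opt_y feas_x; rewrite min_r; [apply: opt_value_of_sol | apply: opt_y.2].
Qed.

End Quadratic.

Section Greedy.
Variables (R : realFieldType) (n : nat).
Implicit Types (c u v : 'I_n -> R).

Lemma at1_ord v (i : 'I_n) : at1 v i.+1 = v i.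
Proof. by rewrite /at1 /= valK. Qed.

Lemma Usum0 u : Usum u 0 = 0.
Proof. by rewrite /Usum big_pred0. Qed.

Lemma Usum_ordS u (i : 'I_n) : Usum u i.+1 = Usum u i + u i.
Proof.
rewrite /Usum (bigD1 i) //= addrC; congr (_ + _); apply: eq_bigl => j.
by rewrite ltnS -(inj_eq val_inj) /=; case: ltngtP.
Qed.

Lemma Gk_ord c u (i : 'I_n) : Gk c u i.+1 = Usum u i + 2^-1 * u i - c i.
Proof. by rewrite /Gk !at1_ord. Qed.

Definition greedy u (K : 'I_n) (d : R) := vadd (xk u K) (vscale d (unitv K.+1)).

Lemma greedyE u K d i :
  greedy u K d i = if (i < K)%N then u i else if i == K :> nat then d else 0.
Proof.
rewrite /greedy /vadd /xk /vscale /unitv eqSS.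
by case: ltngtP; rewrite ?mulr1 ?mulr0 ?addr0 ?add0r.
Qed.

Lemma sum_greedy u K d : \sum_i greedy u K d i = Usum u K + d.
Proof.
rewrite big_split /= /Usum [in RHS]big_mkcond; congr (_ + _).
rewrite -mulr_sumr (bigD1 K) //= /unitv eqxx big1 ?addr0 ?mulr1 // => i ne_iK.
by rewrite eqSS (inj_eq val_inj) (negbTE ne_iK).
Qed.

Lemma feasible_greedy u K d : (forall i, 0 < u i) -> 0 <= d <= u K ->
  feasible u (greedy u K d).
Proof.
move=> u_gt0 /andP[d_ge0 d_le] i; have := u_gt0 i.
by rewrite greedyE; case: ltngtP => [_|_|/val_inj ->] ?; split; lra.
Qed.

Variables (c u : 'I_n -> R).
Hypotheses (c_noninc : forall i j : 'I_n, (i <= j)%N -> c j <= c i)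
           (u_gt0 : forall i, 0 < u i).

Lemma feasible_greedy_min (K : 'I_n) : Usum u K <= c K ->
  feasible u (greedy u K (Num.min (c K - Usum u K) (u K))).
Proof.
move=> U_le; apply: feasible_greedy => //.
by rewrite ge_min lexx orbT le_min subr_ge0 U_le ltW.
Qed.

Lemma greedy_opt_sol (K : 'I_n) :
  Usum u K <= c K ->
  (forall i : 'I_n, (K < i)%N -> c i <= Usum u K + u K) ->
  is_opt_sol c u (greedy u K (Num.min (c K - Usum u K) (u K))).
Proof.
move=> U_le c_after; set d := Num.min _ _.
have d_le_cK : Usum u K + d <= c K by rewrite -lerBrDl ge_min lexx.
have d_cases : Usum u K + d = c K \/ d = u K.
  by rewrite /d minEle; case: ifP; [left; rewrite addrCA subrr addr0 | right].
apply: kkt_opt_sol; first exact: feasible_greedy_min.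
move=> i; rewrite sum_greedy greedyE; case: ltngtP => [lt_iK|lt_Ki|/val_inj ->].
- by apply: Or32; split=> //; exact: le_trans d_le_cK (c_noninc (ltnW lt_iK)).
- apply: Or31; split=> //; have cKi := c_noninc (ltnW lt_Ki).
  by case: d_cases => ->; [|apply: c_after].
- by case: d_cases => ?; [apply: Or33 | apply: Or32].
Qed.

Lemma opt_value_min_consecutive (J K : 'I_n) : K = J.+1 :> nat ->
  Usum u J + 2^-1 * u J - c J < 0 -> 0 <= Usum u K + 2^-1 * u K - c K ->
  is_opt_value c u
    (Num.min (fobj c (greedy u J (Num.min (c J - Usum u J) (u J))))
             (fobj c (greedy u K (Num.max (c K - Usum u K) 0)))).
Proof.
move=> KE G_J G_K; have uJ := u_gt0 J; have uK := u_gt0 K.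
have UK : Usum u K = Usum u J + u J by rewrite KE Usum_ordS.
have c_after_J (i : 'I_n) : (J < i)%N -> c i <= c K by rewrite -KE; apply: c_noninc.
have [cK_le|UK_lt] := leP (c K) (Usum u K).
- apply: opt_value_min_l.
    by apply: greedy_opt_sol => [|i /c_after_J]; lra.
  by apply: feasible_greedy => //; rewrite max_r ?lexx /=; lra.
- (* G_K >= 0 keeps c K - Usum u K below u K / 2. *)
  have -> : Num.max (c K - Usum u K) 0 = Num.min (c K - Usum u K) (u K).
    by rewrite max_l ?min_l; lra.
  apply: opt_value_min_r; last by apply: feasible_greedy_min; lra.
  by apply: greedy_opt_sol => [|i /ltnW /c_noninc]; lra.
Qed.

Lemma opt_value_first (J : 'I_n) : J = 0 :> nat ->
  0 <= c J -> 0 <= 2^-1 * u J - c J ->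
  is_opt_value c u (fobj c (vscale (Num.min (c J) (u J)) (unitv 1))).
Proof.
move=> J0 cJ_ge0 G_J; have U0 : Usum u J = 0 by rewrite J0 Usum0.
have -> : Num.min (c J) (u J) = Num.min (c J - Usum u J) (u J).
  by rewrite U0 subr0.
set d := Num.min _ _; rewrite (@fobj_ext _ _ c _ (greedy u J d)) => [|i]; last first.
  by rewrite greedyE J0 /vscale /unitv; case: (nat_of_ord i) => [|k]; rewrite /= ?mulr1 ?mulr0.
apply: opt_value_of_sol; apply: greedy_opt_sol => [|i /ltnW /c_noninc]; rewrite U0 //.
by have := u_gt0 J; lra.
Qed.

Lemma opt_sol_last (K : 'I_n) : K.+1 = n ->
  Usum u K + 2^-1 * u K - c K < 0 ->
  is_opt_sol c u (greedy u K (Num.min (c K - Usum u K) (u K))).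
Proof.
move=> KE G_K; apply: greedy_opt_sol => [|i]; first by have := u_gt0 K; lra.
by rewrite ltnNge -ltnS KE ltn_ord.
Qed.

End Greedy.

Theorem theorem4 (R : realFieldType) (n : nat) (c u : 'I_n -> R) :
  (1 <= n)%N ->
  (forall i j : 'I_n, (i <= j)%N -> c j <= c i) ->
  (forall i : 'I_n, 0 <= c i) ->
  (forall i : 'I_n, 0 < u i) ->
  (* (i) *)
  (forall nb : nat,
     (1 < nb <= n)%N ->
     0 <= Gk c u nb ->
     (forall k : nat, (1 <= k < nb)%N -> Gk c u k < 0) ->
     let d1 := Num.min (at1 c nb.-1 - Usum u nb.-2) (at1 u nb.-1) in
     let d2 := Num.max (at1 c nb - Usum u nb.-1) 0 in
     let xbar := vadd (xk u nb.-2) (vscale d1 (unitv nb.-1)) in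
     let xtil := vadd (xk u nb.-1) (vscale d2 (unitv nb)) in
     is_opt_value c u (Num.min (fobj c xbar) (fobj c xtil)))
  /\
  (* (ii) *)
  (0 <= Gk c u 1 ->
     is_opt_value c u
       (fobj c (vscale (Num.min (at1 c 1) (at1 u 1)) (unitv 1))))
  /\
  (* (iii) *)
  ((forall k : nat, (1 <= k <= n)%N -> Gk c u k < 0) ->
     let d' := Num.min (at1 c n - Usum u n.-1) (at1 u n) in
     let xtil := vadd (xk u n.-1) (vscale d' (unitv n)) in
     is_opt_sol c u xtil /\ is_opt_value c u (fobj c xtil)).
Proof.
move=> n_gt0 c_noninc c_ge0 u_gt0; split; [|split].
- case=> [|[|m]] //= lt_m1n; have lt_mn := ltnW lt_m1n.
  rewrite (Gk_ord _ _ (Ordinal lt_m1n)) => G_K /(_ m.+1 (leqnn _)).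
  rewrite (Gk_ord _ _ (Ordinal lt_mn)) => G_J.
  rewrite !(at1_ord _ (Ordinal lt_mn)) (at1_ord _ (Ordinal lt_m1n)).
  have KE : Ordinal lt_m1n = (Ordinal lt_mn).+1 :> nat by [].
  exact (opt_value_min_consecutive c_noninc u_gt0 KE G_J G_K).
- rewrite (Gk_ord _ _ (Ordinal n_gt0)) !(at1_ord _ (Ordinal n_gt0)) => G_1.
  by apply: opt_value_first; rewrite //= Usum0 add0r in G_1.
- case: n c u n_gt0 c_noninc c_ge0 u_gt0 => [//|m] c u _ c_noninc _ u_gt0.
  move=> /(_ m.+1 (leqnn _)); rewrite (Gk_ord _ _ ord_max) => G_K /=.
  rewrite !(at1_ord _ ord_max).
  have opt := opt_sol_last c_noninc u_gt0 (K := ord_max) (erefl _) G_K.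
  by split; last exact: opt_value_of_sol.
Qed.
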